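(* Let $H$ be a CAT($-1$) space, $G<\operatorname{Isom}(H)$ acting cocompactly, and $\Phi\in\mathcal{H}$ a $G$-invariant function. Then $\lambda_\Phi=\lambda_{\hat\Phi}\geq\lambda_{\mathrm{Sym}(\Phi)}$.
   Context: $SH$ is the space of unit speed bi-infinite geodesics in $H$ with metric $\operatorname{dist}(\gamma_1,\gamma_2)=\frac12\int_{-\infty}^{\infty}d(\gamma_1(t),\gamma_2(t))e^{-|t|}dt$, geodesic flow $\mathsf g^t\gamma(s)=\gamma(s+t)$, $G$ acting by composition; every geodesic segment is assumed to extend to a bi-infinite geodesic. $\mathcal{H}$ is the set of bounded Hölder functions $\Phi$ on $SH$ with $\Phi(\gamma_1)=\Phi(\gamma_2)$ whenever $\gamma_1|_{[0,\epsilon]}=\gamma_2|_{[0,\epsilon]}$ for some $\epsilon>0$. $\hat\Phi(\gamma)=\Phi(-\gamma)$ with $-\gamma(t)=\gamma(-t)$, and $\mathrm{Sym}(\Phi)=\frac{\Phi+\hat\Phi}{2}$. For any function $\Psi$ on $SH$ and $p\neq q$, $d^\Psi(p,q)=\int_0^{d(p,q)}\Psi(\mathsf g^t\gamma_{p,q})dt$ with $\gamma_{p,q}\in SH$ a geodesic with $\gamma_{p,q}(0)=p$, $\gamma_{p,q}(d(p,q))=q$. The critical exponent is $\lambda_\Psi=\sup\{\lambda:\sum_{g\in G}e^{-d^\Psi(p,gp)-\lambda d(p,gp)}=\infty\}$ for a fixed $p\in H$ (independent of $p$). *)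

From HB Require Import structures.
From mathcomp Require Import all_boot all_order all_algebra.
From mathcomp Require Import all_classical all_reals all_analysis.
Set Implicit Arguments. Unset Strict Implicit. Unset Printing Implicit Defensive.
Import Order.TTheory GRing.Theory Num.Theory numFieldNormedType.Exports.
Local Open Scope classical_set_scope.
Local Open Scope ring_scope.

Section Defs.
Variables (R : realType) (H : choiceType) (d : H -> H -> R).

Definition is_metric : Prop :=
  [/\ forall x y, 0 <= d x y,
      forall x y, d x y = 0 <-> x = y,
      forall x y, d x y = d y x &
      forall x y z, d x z <= d x y + d y z].

Definition is_geodesic (g : R -> H) : Prop :=
  forall s t, d (g s) (g t) = `|s - t|.

Definition is_segment (c : R -> H) (p q : H) : Prop :=
  c 0 = p /\ c (d p q) = q /\
  forall s t, 0 <= s <= d p q -> 0 <= t <= d p q -> d (c s) (c t) = `|s - t|.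

Definition geodesic_space : Prop :=
  forall p q, exists c, is_segment c p q.

Definition segments_extend : Prop :=
  forall c p q, is_segment c p q ->
    exists g, is_geodesic g /\ forall t, 0 <= t <= d p q -> g t = c t.

Definition cosh (x : R) : R := (expR x + expR (- x)) / 2.
Definition sinh (x : R) : R := (expR x - expR (- x)) / 2.

(** cosh of the distance in the hyperbolic plane H^2 between the comparison
    points at distances [s] and [t] from the vertex [p'] on the sides
    [p'q'] and [p'r'] of the comparison triangle with side lengths
    a = |p'q'|, b = |p'r'|, c = |q'r'| (hyperbolic law of cosines). *)
Definition cosh_comparison (a b c s t : R) : R :=
  cosh s * cosh t - sinh s * sinh t *
    ((cosh a * cosh b - cosh c) / (sinh a * sinh b)).

(** CAT(-1): geodesic space whose geodesic triangles are thinner than their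
    comparison triangles in H^2 (checked for a pair of points on two sides
    issuing from a common vertex, which covers all pairs of points). *)
Definition CAT_minus1 : Prop :=
  is_metric /\ geodesic_space /\
  forall p q r c1 c2, is_segment c1 p q -> is_segment c2 p r ->
    forall s t, 0 <= s <= d p q -> 0 <= t <= d p r ->
      cosh (d (c1 s) (c2 t)) <= cosh_comparison (d p q) (d p r) (d q r) s t.

Definition isometry (g : H -> H) : Prop :=
  (forall x y, d (g x) (g y) = d x y) /\ (forall y, exists x, g x = y).

Definition isom_subgroup (G : set (H -> H)) : Prop :=
  [/\ forall g, G g -> isometry g,
      G id,
      forall g h, G g -> G h -> G (g \o h) &
      forall g, G g -> exists h, G h /\ g \o h = id /\ h \o g = id].

Definition seq_compact (K : set H) : Prop :=
  forall u : nat -> H, (forall n, K (u n)) ->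
    exists (phi : nat -> nat) (x : H), (forall n, (phi n < phi n.+1)%N) /\ K x /\
      (fun n => d (u (phi n)) x) @ \oo --> 0.

Definition cocompact (G : set (H -> H)) : Prop :=
  exists K, seq_compact K /\ forall x, exists g k, G g /\ K k /\ x = g k.

Definition distSH (g1 g2 : R -> H) : R :=
  2^-1 * fine (\int[lebesgue_measure]_(t in [set: R])
                 (d (g1 t) (g2 t) * expR (- `|t|))%:E)%E.

(** the class \mathcal{H} (functions on SH, i.e. on geodesics) *)
Definition classH (Phi : (R -> H) -> R) : Prop :=
  (exists M, forall g, is_geodesic g -> `|Phi g| <= M) /\
  (exists C alpha, 0 < alpha <= 1 /\
     forall g1 g2, is_geodesic g1 -> is_geodesic g2 ->
       `|Phi g1 - Phi g2| <= C * (distSH g1 g2) `^ alpha) /\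
  (forall g1 g2, is_geodesic g1 -> is_geodesic g2 ->
     (exists eps, 0 < eps /\ forall t, 0 <= t <= eps -> g1 t = g2 t) ->
     Phi g1 = Phi g2).

Definition G_invariant (G : set (H -> H)) (Phi : (R -> H) -> R) : Prop :=
  forall g gam, G g -> is_geodesic gam -> Phi (g \o gam) = Phi gam.

Definition flow (t : R) (gam : R -> H) : R -> H := fun s => gam (s + t).
Definition flip (gam : R -> H) : R -> H := fun s => gam (- s).
Definition hat (Phi : (R -> H) -> R) : (R -> H) -> R := fun gam => Phi (flip gam).
Definition Sym (Phi : (R -> H) -> R) : (R -> H) -> R :=
  fun gam => (Phi gam + hat Phi gam) / 2.

Definition geodesic_choice (gpq : H -> H -> R -> H) : Prop :=
  forall p q, p <> q ->
    [/\ is_geodesic (gpq p q), gpq p q 0 = p & gpq p q (d p q) = q].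

Definition dPsi (gpq : H -> H -> R -> H) (Psi : (R -> H) -> R) (p q : H) : R :=
  let I : set R := [set t : R | (0 <= t <= d p q)%R] in
  fine (\int[lebesgue_measure]_(t in I) (Psi (flow t (gpq p q)))%:E)%E.

Definition crit_exp (G : set (H -> H)) (gpq : H -> H -> R -> H)
    (Psi : (R -> H) -> R) (p : H) : \bar R :=
  ereal_sup [set (lam%:E)%E | lam in
     [set lam : R | (\esum_(g in G)
        (expR (- dPsi gpq Psi p (g p) - lam * d p (g p)))%:E)%E = +oo%E]].

End Defs.

(* Geodesic segments in a CAT(-1) space are unique, so an isometry g^-1 of
   the group maps the reversed segment from p to g p onto the segment from p
   to g^-1 p.  Since Phi is G-invariant and only depends on the germ of a
   geodesic, this gives d^hat(Phi)(p, g p) = d^Phi(p, g^-1 p), and reindexing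
   the Poincare series by g |-> g^-1, which preserves d(p, g p), shows that
   the series of Phi and hat(Phi) coincide.  As d^Sym(Phi) is the average of
   d^Phi and d^hat(Phi) and exp((x + y) / 2) <= exp x + exp y, the series of
   Sym(Phi) is dominated by twice that of Phi.  Hoelder continuity of Phi is
   only used to make t |-> Phi(g^t gamma) continuous, hence integrable. *)
From Pilot Require Import Defs.
From mathcomp Require Import all_boot all_order all_algebra.
From mathcomp Require Import all_classical all_reals all_analysis.
From mathcomp Require Import measurable_realfun ring lra.
Import Order.TTheory GRing.Theory Num.Theory numFieldNormedType.Exports.
Set Implicit Arguments. Unset Strict Implicit. Unset Printing Implicit Defensive.
Local Open Scope classical_set_scope.
Local Open Scope ring_scope.

Section real_analysis.
Variable R : realType.
Notation mu := (@lebesgue_measure R).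

Lemma cosh0 : cosh (0 : R) = 1.
Proof. by rewrite /cosh oppr0 expR0 -[1 + 1]/(2%:R) divff. Qed.

Lemma cosh_sqr_sub_sinh_sqr (x : R) : cosh x ^+ 2 - sinh x ^+ 2 = 1.
Proof.
have e1 : expR x * expR (- x) = 1 by rewrite -expRD subrr expR0.
by rewrite /cosh /sinh -[RHS]e1; field.
Qed.

Lemma sinh_gt0 (x : R) : 0 < x -> 0 < sinh x.
Proof. by move=> x0; rewrite /sinh divr_gt0// subr_gt0 ltr_expR; lra. Qed.

Lemma cosh_gt1 (x : R) : 0 < x -> 1 < cosh x.
Proof.
move=> x0; have e1 : expR x * expR (- x) = 1 by rewrite -expRD subrr expR0.
have a1 : 0 < expR x - 1 by rewrite subr_gt0 -expR0 ltr_expR.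
have := mulr_gt0 (mulr_gt0 a1 a1) (expR_gt0 (- x)).
rewrite /cosh; set a := expR x in e1 a1 *; set b := expR (- x) in e1 *.
have -> : (a - 1) * (a - 1) * b = a * (a * b) - 2 * (a * b) + b by ring.
rewrite e1; lra.
Qed.

Lemma expR_midpoint_le (x y : R) : expR ((x + y) / 2) <= expR x + expR y.
Proof.
have [xy|yx] := leP x y.
  by apply: (le_trans (y := expR y)); rewrite ?lerDr ?expR_ge0// ler_expR; lra.
by apply: (le_trans (y := expR x)); rewrite ?lerDl ?expR_ge0// ler_expR; lra.
Qed.

Lemma fineM_EFin_ge0 (c : R) (x : \bar R) : 0 <= c -> (0 <= x)%E ->
  fine (c%:E * x)%E = c * fine x.
Proof.
move=> c0; case: x => [r| |] //= _.
have [->|cp] := eqVneq c 0; first by rewrite mul0e /= mul0r.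
by rewrite gt0_muley/= ?mulr0// lte_fin lt_neqAle eq_sym cp.
Qed.

Lemma holder_continuous (F : R -> R) (C a : R) : 0 < a ->
  (forall t s, `|F t - F s| <= C * `|t - s| `^ a) -> continuous F.
Proof.
move=> a0 hF t; apply/cvgrPdist_lt => e e0.
set c := `|C| + 1; have c0 : 0 < c by rewrite ltr_wpDl.
have Cc : C <= c by have := ler_norm C; rewrite /c; lra.
set delta := (e / c) `^ a^-1.
have delta0 : 0 < delta by rewrite powR_gt0// divr_gt0.
have deltaE : delta `^ a = e / c.
  by rewrite -powRrM mulVf ?gt_eqF// powRr1// ltW// divr_gt0.
apply/nbhs_ballP; exists delta => //= s /= ts.
apply: (le_lt_trans (hF t s)); apply: (le_lt_trans (y := c * `|t - s| `^ a)).
  by rewrite ler_wpM2r ?powR_ge0.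
rewrite mulrC -ltr_pdivlMr// -deltaE.
by apply: gt0_ltr_powR => //; rewrite nnegrE ?ltW.
Qed.

Lemma continuous_integrable_itv (F : R -> R) (a b : R) : continuous F ->
  mu.-integrable `[a, b] (EFin \o F).
Proof.
move=> cF; apply: continuous_compact_integrable; first exact: segment_compact.
exact: continuous_subspaceT.
Qed.

Lemma continuous_reflect (F : R -> R) (D : R) :
  continuous F -> continuous (fun t => F (D - t)).
Proof.
move=> cF t.
have cD : {for t, continuous (fun t => D - t)} by apply: cvgB => //; exact: cvg_cst.
exact: (continuous_comp cD (cF _)).
Qed.

Lemma continuous_measurable_fun_in (F : R -> R) (A : set R) :
  measurable A -> continuous F -> measurable_fun A F.
Proof.
move=> mA cF; apply: (measurable_funS measurableT) => //.
exact: continuous_measurable_fun.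
Qed.

Lemma integral_itv_reflect (F : R -> R) (D : R) : 0 <= D -> continuous F ->
  (\int[mu]_(x in `[0%R, D]) (F x)%:E = \int[mu]_(x in `[0%R, D]) (F (D - x))%:E)%E.
Proof.
move=> D0 cF.
have dsub : (fun x => D - x : R^o)^`()%classic = cst (-1).
  by apply/funext => x; rewrite derive1E deriveB// derive_id derive_cst sub0r.
have := @integration_by_substitution_decreasing R (fun x => D - x) F 0 D D0.
rewrite subrr subr0 => -> //.
- by apply: eq_integral => x _; rewrite !fctE dsub opprK mulr1.
- by move=> x y _ _ xy; rewrite ltrD2l ltrN2.
- by rewrite dsub => ? ?; exact: cvg_cst.
- by rewrite dsub; exact: is_cvg_cst.
- by rewrite dsub; exact: is_cvg_cst.
- split => /=; first by move=> x _; exact: derivableB.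
  + by apply: cvg_at_right_filter; apply: cvgB => //; exact: cvg_cst.
  + by apply: cvg_at_left_filter; apply: cvgB => //; exact: cvg_cst.
- exact: continuous_subspaceT.
Qed.

End real_analysis.

Section geodesics.
Variables (R : realType) (H : choiceType) (d : H -> H -> R).
Notation mu := (@lebesgue_measure R).

Lemma is_geodesic_flow (g : R -> H) t : is_geodesic d g -> is_geodesic d (flow t g).
Proof. by move=> hg s u; rewrite /flow hg; congr `|_|; ring. Qed.

Lemma is_geodesic_flip (g : R -> H) : is_geodesic d g -> is_geodesic d (flip g).
Proof. by move=> hg s u; rewrite /flip hg -normrN; congr `|_|; ring. Qed.

Lemma is_geodesic_comp (h : H -> H) (g : R -> H) :
  Defs.isometry d h -> is_geodesic d g -> is_geodesic d (h \o g).
Proof. by move=> [hd _] hg s u; rewrite /= hd hg. Qed.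

Lemma CAT_minus1_segment_unique (c1 c2 : R -> H) (p q : H) : CAT_minus1 d ->
  is_segment d c1 p q -> is_segment d c2 p q ->
  forall s, 0 <= s <= d p q -> c1 s = c2 s.
Proof.
move=> [[d_ge0 d_eq0 _ _] [_ thin]] hc1 hc2 s s_in.
have [D0|D_neq0] := eqVneq (d p q) 0.
  have -> : s = 0 by move: s_in; rewrite D0; lra.
  by case: hc1 => ->; case: hc2 => ->.
have Dpos : 0 < d p q by rewrite lt_neqAle eq_sym D_neq0 d_ge0.
(* the comparison triangle of (p, q, q) is degenerate *)
have degenerate : cosh_comparison (d p q) (d p q) (d q q) s s = 1.
  have shD : sinh (d p q) ^+ 2 != 0 by rewrite expf_neq0// gt_eqF// sinh_gt0.
  have chD : cosh (d p q) ^+ 2 - 1 = sinh (d p q) ^+ 2.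
    by have := cosh_sqr_sub_sinh_sqr (d p q); lra.
  rewrite /cosh_comparison (proj2 (d_eq0 q q)) // cosh0 -!expr2 chD.
  by rewrite divff// mulr1 cosh_sqr_sub_sinh_sqr.
have := thin p q q c1 c2 hc1 hc2 s s s_in s_in; rewrite degenerate => cosh_le1.
apply/d_eq0/eqP; rewrite eq_le d_ge0 andbT leNgt.
by apply/negP => /cosh_gt1; rewrite ltNge cosh_le1.
Qed.

(* equal to 1, but only its nonnegativity is needed *)
Definition distSH_scale : R :=
  2^-1 * fine (\int[mu]_(t in [set: R]) (expR (- `|t|))%:E)%E.

Lemma distSH_scale_ge0 : 0 <= distSH_scale.
Proof.
by rewrite mulr_ge0 ?invr_ge0// fine_ge0// integral_ge0// => x _; rewrite lee_fin expR_ge0.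
Qed.

Lemma distSH_const (g1 g2 : R -> H) (c : R) : 0 <= c ->
  (forall u, d (g1 u) (g2 u) = c) -> distSH d g1 g2 = c * distSH_scale.
Proof.
move=> c0 hc; rewrite /distSH /distSH_scale.
under eq_integral do rewrite hc EFinM.
rewrite ge0_integralZl_EFin//; last first.
  apply/measurable_EFinP; apply: measurableT_comp; first exact: measurable_expR.
  by apply: measurableT_comp => //; exact: normr_measurable.
rewrite fineM_EFin_ge0// 1?mulrCA//.
by rewrite integral_ge0// => x _; rewrite lee_fin expR_ge0.
Qed.

Lemma classH_continuous (Phi : (R -> H) -> R) (Gam : R -> R -> H) : classH d Phi ->
  (forall t, is_geodesic d (Gam t)) ->
  (forall t s u, d (Gam t u) (Gam s u) = `|t - s|) ->
  continuous (fun t => Phi (Gam t)).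
Proof.
move=> [_ [[C [a [/andP[a0 _] hol]]] _]] geoGam dGam.
apply: (@holder_continuous _ _ (C * distSH_scale `^ a) a a0) => t s.
have dist_ts : distSH d (Gam t) (Gam s) = `|t - s| * distSH_scale.
  by apply: distSH_const => // u; exact: dGam.
rewrite -mulrA -powRM ?distSH_scale_ge0// [distSH_scale * _]mulrC -dist_ts.
exact: hol.
Qed.

Lemma classH_continuous_flow (Phi : (R -> H) -> R) (g : R -> H) :
  classH d Phi -> is_geodesic d g -> continuous (fun t => Phi (flow t g)).
Proof.
move=> hPhi hg; apply: (@classH_continuous Phi (fun t => flow t g)) => // [t|t s u].
  exact: is_geodesic_flow.
by rewrite /flow hg; congr `|_|; ring.
Qed.

Lemma classH_continuous_hat_flow (Phi : (R -> H) -> R) (g : R -> H) :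
  classH d Phi -> is_geodesic d g -> continuous (fun t => hat Phi (flow t g)).
Proof.
move=> hPhi hg; apply: (@classH_continuous Phi (fun t => flip (flow t g))) => // [t|t s u].
  exact/is_geodesic_flip/is_geodesic_flow.
by rewrite /flip /flow hg; congr `|_|; ring.
Qed.

End geodesics.

Section weighted_length.
Variables (R : realType) (H : choiceType) (d : H -> H -> R).
Variables (gpq : H -> H -> R -> H) (Phi : (R -> H) -> R).
Hypotheses (hcat : CAT_minus1 d) (hPhi : classH d Phi) (hch : geodesic_choice d gpq).
Notation mu := (@lebesgue_measure R).

Lemma dPsiE (Psi : (R -> H) -> R) p q :
  dPsi d gpq Psi p q = \int[mu]_(t in `[0, d p q]) Psi (flow t (gpq p q)).
Proof. by []. Qed.

Lemma dPsi_id (Psi : (R -> H) -> R) p : dPsi d gpq Psi p p = 0.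
Proof.
have [[_ d_eq0 _ _] _] := hcat.
by rewrite dPsiE (proj2 (d_eq0 p p))// set_itv1 Rintegral_set1.
Qed.

Lemma dPsi_Sym p q :
  dPsi d gpq (Sym Phi) p q = (dPsi d gpq Phi p q + dPsi d gpq (hat Phi) p q) / 2.
Proof.
have [<-|pq] := eqVneq p q; first by rewrite !dPsi_id addr0 mul0r.
have [geo _ _] := hch (elimN eqP pq).
have c1 := classH_continuous_flow hPhi geo.
have c2 := classH_continuous_hat_flow hPhi geo.
have c12 : continuous (fun t => Phi (flow t (gpq p q)) + hat Phi (flow t (gpq p q))).
  by move=> t; apply: continuousD; [exact: c1|exact: c2].
rewrite !dPsiE /Sym RintegralZr//; last exact: continuous_integrable_itv.
by rewrite RintegralD//; exact: continuous_integrable_itv.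
Qed.

Variable G : set (H -> H).
Hypotheses (hG : isom_subgroup d G) (hinv : G_invariant d G Phi).
Variables (g h : H -> H).
Hypotheses (Gg : G g) (Gh : G h) (hK : cancel h g) (gK : cancel g h).

Lemma d_inv_orbit p : d p (h p) = d p (g p).
Proof.
have [[_ _ d_sym _] _] := hcat; have [isoG _ _ _] := hG; have [gd _] := isoG g Gg.
by rewrite -gd hK d_sym.
Qed.

(* h maps the reversed segment from p to g p onto the segment from p to h p *)
Lemma hat_flow_gpq_inv p t : p <> g p -> 0 < t <= d p (g p) ->
  hat Phi (flow t (gpq p (g p))) = Phi (flow (d p (g p) - t) (gpq p (h p))).
Proof.
move=> pg /andP[t0 tD].
have [isoG _ _ _] := hG; have [hd _] := isoG h Gh; have [_ [_ Phi_germ]] := hPhi.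
have ph : p <> h p by move=> e; apply: pg; rewrite {2}e hK.
have [geo geo0 geoD] := hch pg; have [geo' geo0' geoD'] := hch ph.
set D := d p (g p) in tD geoD *.
rewrite /hat -(hinv Gh); last exact/is_geodesic_flip/is_geodesic_flow.
apply: Phi_germ; [exact/(is_geodesic_comp (isoG h Gh))/is_geodesic_flip/is_geodesic_flow|
  exact: is_geodesic_flow|].
exists t; split => // s /andP[s0 st].
pose c u := h (gpq p (g p) (D - u)).
have seg_c : is_segment d c p (h p).
  split; first by rewrite /c subr0 geoD gK.
  split; first by rewrite /c d_inv_orbit -/D subrr geo0.
  by move=> u v _ _; rewrite /c hd geo -normrN; congr `|_|; ring.
have seg_gpq : is_segment d (gpq p (h p)) p (h p) by do !split => // u v _ _; exact: geo'.
have := CAT_minus1_segment_unique hcat seg_c seg_gpq (s := s + (D - t)).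
rewrite d_inv_orbit -/D /c /flip /flow /= => <-; last by apply/andP; split; lra.
by congr (h (gpq _ _ _)); ring.
Qed.

Lemma dPsi_hat_inv p : dPsi d gpq (hat Phi) p (g p) = dPsi d gpq Phi p (h p).
Proof.
have [[d_ge0 _ _ _] _] := hcat.
have [pg|pg] := eqVneq p (g p).
  have hp : h p = p by rewrite {1}pg gK.
  by rewrite -pg hp !dPsi_id.
have [geo _ _] := hch (elimN eqP pg).
have ph : p <> h p by move=> e; move: pg; rewrite {2}e hK eqxx.
have [geo' _ _] := hch ph.
rewrite !dPsiE d_inv_orbit; congr fine.
have cPhi := classH_continuous_flow hPhi geo'.
have cPhi_reflect : continuous (fun t => Phi (flow (d p (g p) - t) (gpq p (h p)))).
  exact: continuous_reflect cPhi.
rewrite (integral_itv_reflect (d_ge0 _ _) cPhi).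
apply: eq_integral_itv_bounded.
- by apply: continuous_measurable_fun_in => //; exact: classH_continuous_hat_flow hPhi geo.
- by apply: continuous_measurable_fun_in => //; exact: cPhi_reflect.
move=> t; rewrite in_itv /= => /andP[t0 tD].
by apply: hat_flow_gpq_inv (elimN eqP pg) _; rewrite t0 ltW.
Qed.

End weighted_length.

Section critical_exponent.
Variables (R : realType) (H : choiceType) (d : H -> H -> R).
Variables (G : set (H -> H)) (gpq : H -> H -> R -> H) (p : H).

Definition poincare_series (Psi : (R -> H) -> R) (lam : R) : \bar R :=
  (\esum_(g in G) (expR (- dPsi d gpq Psi p (g p) - lam * d p (g p)))%:E)%E.

Lemma crit_expE (Psi : (R -> H) -> R) : crit_exp d G gpq Psi p =
  ereal_sup [set lam%:E | lam in [set lam | poincare_series Psi lam = +oo%E]].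
Proof. by []. Qed.

Lemma crit_exp_le (Psi1 Psi2 : (R -> H) -> R) :
  (forall lam, poincare_series Psi1 lam = +oo%E -> poincare_series Psi2 lam = +oo%E) ->
  (crit_exp d G gpq Psi1 p <= crit_exp d G gpq Psi2 p)%E.
Proof. by move=> div12; rewrite !crit_expE; apply/ereal_sup_le/image_subset. Qed.

Lemma isom_subgroup_inv : isom_subgroup d G ->
  exists inv, forall g, G g -> [/\ G (inv g), cancel (inv g) g & cancel g (inv g)].
Proof.
move=> [_ _ _ hinvG].
have inv_ex g : exists h, G g -> [/\ G h, cancel h g & cancel g h].
  have [Gg|nGg] := pselect (G g); last by exists g.
  have [h [Gh [gh hg]]] := hinvG g Gg; exists h => _.
  by split=> // x; [exact: (congr1 (@^~ x) gh)|exact: (congr1 (@^~ x) hg)].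
by have [inv invP] := choice inv_ex; exists inv.
Qed.

Variable Phi : (R -> H) -> R.
Hypotheses (hcat : CAT_minus1 d) (hG : isom_subgroup d G) (hPhi : classH d Phi).
Hypotheses (hinv : G_invariant d G Phi) (hch : geodesic_choice d gpq).

Lemma poincare_series_hat lam : poincare_series (hat Phi) lam = poincare_series Phi lam.
Proof.
have [inv invP] := isom_subgroup_inv hG.
have inv_bij : set_bij G G inv.
  have invK g : G g -> inv (inv g) = g.
    move=> Gg; have [Gh hK _] := invP g Gg; have [_ hhK _] := invP _ Gh.
    by apply/funext => x; rewrite -[LHS]hK hhK.
  split; first by move=> g /invP[].
  - by move=> g1 g2 /set_mem G1 /set_mem G2 e; rewrite -(invK g1) // -(invK g2) // e.
  - by move=> g Gg; exists (inv g); [have [] := invP g Gg|exact: invK].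
rewrite /poincare_series [RHS](@reindex_esum _ _ _ G G inv _ inv_bij).
apply: eq_esum => g Gg.
have [Gh hK gK] := invP g Gg.
by rewrite (dPsi_hat_inv hcat hPhi hch hG hinv Gg Gh hK gK) (d_inv_orbit hcat hG Gg hK).
Qed.

Lemma poincare_series_Sym_le lam :
  (poincare_series (Sym Phi) lam <= poincare_series Phi lam + poincare_series (hat Phi) lam)%E.
Proof.
rewrite /poincare_series -esumD => [|g _|g _]; rewrite ?lee_fin ?expR_ge0//.
apply: le_esum => g Gg; rewrite -EFinD lee_fin (dPsi_Sym hcat hPhi hch).
set a := dPsi _ _ Phi _ _; set b := dPsi _ _ (hat Phi) _ _; set D := d p (g p).
have -> : - ((a + b) / 2) - lam * D = ((- a - lam * D) + (- b - lam * D)) / 2 by field.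
exact: expR_midpoint_le.
Qed.

End critical_exponent.

Theorem lemma4p7 (R : realType) (H : choiceType) (d : H -> H -> R)
  (G : set (H -> H)) (Phi : (R -> H) -> R) (gpq : H -> H -> R -> H) (p : H) :
  CAT_minus1 d -> segments_extend d ->
  isom_subgroup d G -> cocompact d G ->
  classH d Phi -> G_invariant d G Phi ->
  geodesic_choice d gpq ->
  crit_exp d G gpq Phi p = crit_exp d G gpq (hat Phi) p /\
  (crit_exp d G gpq (Sym Phi) p <= crit_exp d G gpq Phi p)%E.
Proof.
move=> hcat _ hG _ hPhi hinv hch.
have series_hat := poincare_series_hat p hcat hG hPhi hinv hch.
split; first by rewrite !crit_expE (funext series_hat).
apply: crit_exp_le => lam div_Sym.
have := poincare_series_Sym_le G p hcat hPhi hch lam.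
by rewrite div_Sym series_hat leye_eq; case: (poincare_series d G gpq p Phi lam).
Qed.
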